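(* Let $f:\mathbb{R}^n\to\mathbb{R}$ be a polynomial of degree at most $4$ that can be written as \[ f(x)=g(x)^T G\, g(x)+c^T h(x), \] where $g:\mathbb{R}^n\to\mathbb{R}^p$ and $h:\mathbb{R}^n\to\mathbb{R}^r$ are vector-valued polynomials each of whose components is a linear or quadratic polynomial, $G\in\mathbb{R}^{p\times p}$ is positive definite, and $c\in\mathbb{R}^r$. Let $\lambda$ be the minimum eigenvalue of $G$. Assume: (i) there exist $L_1,R>0$ such that $\|h(x)\|/\|g(x)\|\le R$ whenever $\|x\|>L_1$; (ii)(a) if $f(0)\neq0$, $L>L_1$ is such that $\|g(x)\|>\max\{|f(0)|,(1+\|c\|R)/\lambda\}$ whenever $\|x\|>L$; (ii)(b) if $f(0)=0$, $L>L_1$ is such that $\|g(x)\|>\|c\|R/\lambda$ whenever $\|x\|>L$. Then every global minimizer $x^*$ of $f$ satisfies $\|x^*\|\le L$, i.e., $\operatorname{argmin} f\subset B[0,L]=\{x:\|x\|\le L\}$.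
   Context: $\|\cdot\|$ denotes the Euclidean norm. *)

From mathcomp Require Import all_boot all_order all_algebra.
From mathcomp Require Import reals.
From mathcomp Require Import mpoly.
Set Implicit Arguments. Unset Strict Implicit. Unset Printing Implicit Defensive.
Import Order.TTheory GRing.Theory Num.Theory.
Local Open Scope ring_scope.

Definition enorm (R : realType) (n : nat) (x : 'rV[R]_n) : R :=
  Num.sqrt (\sum_(i < n) x 0 i ^+ 2).

Definition peval (R : realType) (n : nat) (q : {mpoly R[n]}) (x : 'rV[R]_n) : R :=
  q.@[fun i => x 0 i].

Definition pveval (R : realType) (n p : nat) (g : 'I_p -> {mpoly R[n]})
  (x : 'rV[R]_n) : 'rV[R]_p := \row_(i < p) peval (g i) x.

(* total degree of q is at most d  (msize q = 1 + total degree, 0 for q = 0) *)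
Definition deg_le (R : realType) (n : nat) (q : {mpoly R[n]}) (d : nat) : Prop :=
  (msize q <= d.+1)%N.

Definition posdef (R : realType) (p : nat) (G : 'M[R]_p) : Prop :=
  G^T = G /\ forall u : 'rV[R]_p, u != 0 -> 0 < (u *m G *m u^T) 0 0.

Definition min_eigenvalue (R : realType) (p : nat) (G : 'M[R]_p) (lam : R) : Prop :=
  eigenvalue G lam /\ forall mu : R, eigenvalue G mu -> lam <= mu.

Definition qform (R : realType) (p : nat) (G : 'M[R]_p) (v : 'rV[R]_p) : R :=
  (v *m G *m v^T) 0 0.

Definition dotv (R : realType) (r : nat) (c v : 'rV[R]_r) : R :=
  \sum_(i < r) c 0 i * v 0 i.

From mathcomp Require Import all_boot all_order all_algebra.
From mathcomp Require Import reals.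
From mathcomp Require Import mpoly.
From mathcomp Require Import classical_sets boolp topology normedtype derive matrix_normedtype.
From mathcomp Require Import ring lra.
Import Order.TTheory GRing.Theory Num.Theory numFieldNormedType.Exports.
Set Implicit Arguments. Unset Strict Implicit. Unset Printing Implicit Defensive.
Local Open Scope ring_scope.

(** Put N = ||g(x)||. As G is symmetric, its least eigenvalue lam is the
    minimum of the Rayleigh quotient on the (compact) unit sphere, so
    g^T G g >= lam N^2; by Cauchy-Schwarz and (i), c^T h >= -||c|| R N as soon
    as ||x|| > L1. Hence f(x) >= N (lam N - ||c|| R) for ||x|| > L. Under (ii)(b)
    this is > 0 = f(0); under (ii)(a) lam N - ||c|| R > 1, so
    f(x) > N > |f(0)| >= f(0). *)

Lemma quadratic_ge0_discr (F : realFieldType) (a b c : F) : 0 <= c ->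
  (forall t, 0 <= a + 2 * t * b + t ^+ 2 * c) -> b ^+ 2 <= a * c.
Proof.
(* For c > 0 evaluate at the vertex t = -b/c; for c = 0 a linear function
   bounded below is constant. *)
rewrite le0r => /predU1P[-> ge0|c0 ge0].
  rewrite mulr0; have [-> //|b0] := eqVneq b 0; first by rewrite expr0n.
  set t := - (a + 1) / (2 * b).
  have tb : t * (2 * b) = - (a + 1) by rewrite /t divfK // mulf_neq0 ?pnatr_eq0.
  by have := ge0 t; rewrite mulr0; lra.
set t := - b / c; have tc : t * c = - b by rewrite /t divfK ?gt_eqF.
have : 0 <= c * (a + 2 * t * b + t ^+ 2 * c).
  by apply: mulr_ge0; [exact: ltW | exact: ge0].
have -> : c * (a + 2 * t * b + t ^+ 2 * c) = a * c + 2 * (t * c) * b + (t * c) ^+ 2.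
  by ring.
rewrite tc; lra.
Qed.

Lemma continuous_sum (R : numFieldType) (T : topologicalType) (I : Type) (s : seq I)
  (F : I -> T -> R) : (forall i, continuous (F i)) ->
  continuous (fun x => \sum_(i <- s) F i x).
Proof.
move=> cF; elim: s => [|a s IH] /=.
  by under eq_fun do rewrite big_nil; exact: cst_continuous.
under eq_fun do rewrite big_cons.
by move=> x; apply: (@continuousD _ R^o); [exact: cF | exact: IH].
Qed.

Section QuadraticForms.
Variable R : realType.

Definition sqnorm p (u : 'rV[R]_p) := qform 1%:M u.

Lemma sqnormE p (u : 'rV[R]_p) : sqnorm u = \sum_i u 0 i ^+ 2.
Proof.
by rewrite /sqnorm /qform mulmx1 !mxE; apply: eq_bigr => j _; rewrite !mxE expr2.
Qed.

Lemma enorm_sqr p (u : 'rV[R]_p) : enorm u ^+ 2 = sqnorm u.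
Proof. by rewrite sqnormE sqr_sqrtr // sumr_ge0 // => i _; exact: sqr_ge0. Qed.

Lemma sqnorm_ge0 p (u : 'rV[R]_p) : 0 <= sqnorm u.
Proof. by rewrite -enorm_sqr sqr_ge0. Qed.

Lemma sqnorm_eq0 p (u : 'rV[R]_p) : (sqnorm u == 0) = (u == 0).
Proof.
apply/idP/eqP => [|->]; last by rewrite /sqnorm /qform !mul0mx mxE.
rewrite sqnormE psumr_eq0 => [/allP u0|i _]; last exact: sqr_ge0.
apply/rowP => i; rewrite mxE.
by apply/eqP; rewrite -sqrf_eq0; apply: u0; rewrite mem_index_enum.
Qed.

Lemma qformZ p (M : 'M[R]_p) k (u : 'rV[R]_p) :
  qform M (k *: u) = k ^+ 2 * qform M u.
Proof.
by rewrite /qform linearZ /= -scalemxAl -scalemxAr -scalemxAl scalerA mxE expr2.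
Qed.

Lemma qformDZ p (M : 'M[R]_p) (u w : 'rV[R]_p) t : M^T = M ->
  qform M (u + t *: w) =
  qform M u + 2 * t * (u *m M *m w^T) 0 0 + t ^+ 2 * qform M w.
Proof.
move=> sM; have wMu : (w *m M *m u^T) 0 0 = (u *m M *m w^T) 0 0.
  transitivity ((w *m M *m u^T)^T 0 0); first by rewrite [RHS]mxE.
  by rewrite !trmx_mul trmxK sM mulmxA.
rewrite /qform linearD /= linearZ /= !mulmxDl !mulmxDr -!scalemxAl -!scalemxAr.
have eD (X Y : 'M[R]_1) : (X + Y) 0 0 = X 0 0 + Y 0 0 by rewrite mxE.
have eZ k (X : 'M[R]_1) : (k *: X) 0 0 = k * X 0 0 by rewrite mxE.
by rewrite !eD !eZ wMu; ring.
Qed.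

Lemma qform_continuous p (M : 'M[R]_p) : continuous (qform M).
Proof.
have -> : qform M = fun u => \sum_j (\sum_i u 0 i * M i j) * u 0 j.
  by apply: funext => u; rewrite /qform !mxE; apply: eq_bigr => j _; rewrite !mxE.
apply: continuous_sum => j u.
apply: (@continuousM R _ (fun v : 'rV[R]_p => \sum_i v 0 i * M i j) (fun v => v 0 j));
  last exact: coord_continuous.
move: u; apply: continuous_sum => i u.
apply: (@continuousM R _ (fun v : 'rV[R]_p => v 0 i) (fun _ => M i j)).
  exact: coord_continuous.
exact: cst_continuous.
Qed.

Lemma qform_cauchy_schwarz p (M : 'M[R]_p) (u w : 'rV[R]_p) :
  M^T = M -> (forall v, 0 <= qform M v) ->
  ((u *m M *m w^T) 0 0) ^+ 2 <= qform M u * qform M w.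
Proof.
move=> sM psdM; apply: quadratic_ge0_discr => [|t]; first exact: psdM.
by rewrite -qformDZ.
Qed.

Lemma dotv_cauchy_schwarz r (u w : 'rV[R]_r) : `|dotv u w| <= enorm u * enorm w.
Proof.
have uw : dotv u w = (u *m 1%:M *m w^T) 0 0.
  by rewrite mulmx1 mxE; apply: eq_bigr => i _; rewrite mxE.
have := @qform_cauchy_schwarz _ 1%:M u w (trmx1 _ _) (@sqnorm_ge0 _).
rewrite -uw -/(sqnorm u) -/(sqnorm w) -!enorm_sqr -exprMn -real_normK ?num_real //.
by rewrite ler_pXn2r ?nnegrE ?mulr_ge0 ?sqrtr_ge0.
Qed.

Lemma psd_qform_eq0 p (M : 'M[R]_p) (u : 'rV[R]_p) :
  M^T = M -> (forall v, 0 <= qform M v) -> qform M u = 0 -> u *m M = 0.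
Proof.
move=> sM psdM Mu0; apply/rowP => j; rewrite [RHS]mxE.
have := qform_cauchy_schwarz u (delta_mx 0 j) sM psdM.
rewrite Mu0 mul0r trmx_delta -colE mxE => le0.
by apply/eqP; rewrite -sqrf_eq0 eq_le le0 sqr_ge0.
Qed.

End QuadraticForms.

Section Rayleigh.
Variables (R : realType) (p : nat).
Implicit Types (M : 'M[R]_p) (u v : 'rV[R]_p).

Lemma unit_sphere_compact : compact [set u : 'rV[R]_p | sqnorm u = 1]%classic.
Proof.
have cl : closed [set u : 'rV[R]_p | sqnorm u = 1]%classic.
  exact: (continuous_closedP _).1 (@qform_continuous R p 1%:M) _ (@closed_eq _ 1).
apply: (subclosed_compact cl
  (@rV_compact _ _ (fun=> `[(-1 : R), 1]%classic) (fun=> @segment_compact _ _ _))).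
move=> u /= u1 i; rewrite in_itv /=.
have : u 0 i ^+ 2 <= 1.
  by rewrite -u1 sqnormE (bigD1 i) //= lerDl sumr_ge0 // => k _; exact: sqr_ge0.
by move=> ui; apply/andP; split; nra.
Qed.

Lemma qform_ge_sphere_min M c : sqnorm c = 1 ->
    (forall u, sqnorm u = 1 -> qform M c <= qform M u) ->
  forall v, qform M c * sqnorm v <= qform M v.
Proof.
move=> c1 cmin v; have [->|v0] := eqVneq v 0.
  by rewrite /sqnorm /qform !mul0mx !mxE mulr0.
have sv0 : 0 < sqnorm v by rewrite lt0r sqnorm_eq0 v0 sqnorm_ge0.
set s := enorm v; have s2 : s ^+ 2 = sqnorm v by exact: enorm_sqr.
have := cmin (s^-1 *: v).
rewrite /sqnorm !qformZ -/(sqnorm v) exprVn s2 mulVf ?gt_eqF // => /(_ erefl).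
by rewrite -(ler_pM2l sv0) mulrA mulfV ?gt_eqF // mul1r mulrC.
Qed.

Lemma qform_min_eigenvector M m c : M^T = M -> sqnorm c = 1 -> qform M c = m ->
  (forall v, m * sqnorm v <= qform M v) -> c *m M = m *: c.
Proof.
(* M - m is positive semidefinite and its form vanishes at c. *)
move=> sM c1 cm mle; pose A := M - m%:M.
have qA v : qform A v = qform M v - m * sqnorm v.
  by rewrite /sqnorm /qform /A mulmxBr mulmxBl mul_mx_scalar -scalemxAl mulmx1 !mxE.
have /eqP : c *m A = 0.
  apply: psd_qform_eq0 => [|v|]; first by rewrite /A linearB /= tr_scalar_mx sM.
    by rewrite qA subr_ge0.
  by rewrite qA c1 mulr1 cm subrr.
by rewrite /A mulmxBr mul_mx_scalar subr_eq0 => /eqP.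
Qed.

Lemma eigenvalue_qform_lb M : M^T = M -> (0 < p)%N ->
  exists2 m, eigenvalue M m & forall v, m * sqnorm v <= qform M v.
Proof.
move=> sM p0; set S := [set u : 'rV[R]_p | sqnorm u = 1]%classic.
have S0 : (S !=set0)%classic.
  exists (delta_mx 0 (Ordinal p0)); rewrite /S /= sqnormE (bigD1 (Ordinal p0)) //=.
  by rewrite big1 => [|i /negPf ni]; rewrite !mxE ?ni ?eqxx ?expr1n ?expr0n ?addr0.
have [c /set_mem c1 cmin] := EVT_min_rV S0 unit_sphere_compact
  (continuous_subspaceT (@qform_continuous R p M)).
have mle := qform_ge_sphere_min c1 (fun u (u1 : sqnorm u = 1) => cmin u (mem_set u1)).
exists (qform M c) => //; apply/eigenvalueP; exists c.
  exact: qform_min_eigenvector.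
by rewrite -sqnorm_eq0 c1 oner_neq0.
Qed.

Lemma min_eigenvalue_qform_lb M lam : M^T = M -> min_eigenvalue M lam ->
  forall v, lam * enorm v ^+ 2 <= qform M v.
Proof.
move=> sM [/eigenvalueP[w _ w0] lam_min] v.
have p0 : (0 < p)%N.
  rewrite lt0n; apply: contra w0 => /eqP p0; apply/eqP/rowP => -[i /= ip].
  suff : (i < 0)%N by []; by rewrite -p0.
have [m /lam_min lam_m mle] := eigenvalue_qform_lb sM p0.
by rewrite enorm_sqr; apply: le_trans (mle v); rewrite ler_wpM2r ?sqnorm_ge0.
Qed.

Lemma posdef_eigenvalue_gt0 M lam : posdef M -> eigenvalue M lam -> 0 < lam.
Proof.
move=> [_ pM] /eigenvalueP[v vM v0]; have := pM v v0; rewrite vM -scalemxAl mxE.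
have -> : (v *m v^T) 0 0 = sqnorm v by rewrite /sqnorm /qform mulmx1.
by rewrite pmulr_lgt0 // lt0r sqnorm_eq0 v0 sqnorm_ge0.
Qed.

End Rayleigh.

Lemma qform_add_dotv_lb (R : realType) p r (G : 'M[R]_p) lam Rb
    (c hx : 'rV[R]_r) (gx : 'rV[R]_p) :
    G^T = G -> min_eigenvalue G lam ->
    0 < enorm gx -> enorm hx / enorm gx <= Rb ->
  enorm gx * (lam * enorm gx - enorm c * Rb) <= qform G gx + dotv c hx.
Proof.
move=> sG lamG gx0; rewrite ler_pdivrMr // => hx_le.
have qG := min_eigenvalue_qform_lb sG lamG gx.
have cs := dotv_cauchy_schwarz c hx.
have chx : enorm c * enorm hx <= enorm c * (Rb * enorm gx).
  by rewrite ler_wpM2l ?sqrtr_ge0.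
have := ler_norm (- dotv c hx); rewrite normrN.
nra.
Qed.

Theorem theorem3 (R : realType) (n p r : nat) (f : {mpoly R[n]})
  (g : 'I_p -> {mpoly R[n]}) (h : 'I_r -> {mpoly R[n]})
  (G : 'M[R]_p) (c : 'rV[R]_r) (lam L1 Rb L : R) :
  deg_le f 4 ->
  (forall i, deg_le (g i) 2) ->
  (forall i, deg_le (h i) 2) ->
  posdef G ->
  (forall x, peval f x = qform G (pveval g x) + dotv c (pveval h x)) ->
  min_eigenvalue G lam ->
  (* (i) *)
  0 < L1 -> 0 < Rb ->
  (forall x, L1 < enorm x -> enorm (pveval h x) / enorm (pveval g x) <= Rb) ->
  (* (ii) *)
  L1 < L ->
  (peval f 0 != 0 -> forall x, L < enorm x ->
     Num.max `|peval f 0| ((1 + enorm c * Rb) / lam) < enorm (pveval g x)) ->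
  (peval f 0 = 0 -> forall x, L < enorm x ->
     enorm c * Rb / lam < enorm (pveval g x)) ->
  forall xs : 'rV[R]_n, (forall y, peval f xs <= peval f y) -> enorm xs <= L.
Proof.
move=> _ _ _ G_pd fE lamG _ Rb0 hg_le L1L big_g0 big_g xs xs_min.
have lam0 : 0 < lam := posdef_eigenvalue_gt0 G_pd lamG.1.
have sG : G^T = G := G_pd.1.
rewrite leNgt; apply/negP => Lxs.
set N := enorm (pveval g xs).
have f_lb : 0 < N -> N * (lam * N - enorm c * Rb) <= peval f xs.
  move=> N0; rewrite fE; apply: qform_add_dotv_lb => //.
  exact/hg_le/(lt_trans L1L).
have cRb0 : 0 <= enorm c * Rb / lam.
  by apply: divr_ge0; [apply: mulr_ge0; [exact: sqrtr_ge0 | exact: ltW] | exact: ltW].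
have := xs_min 0; apply/negP; rewrite -ltNge.
have [f00|f0n0] := eqVneq (peval f 0) 0.
  have := big_g f00 xs Lxs; rewrite -/N => cRbN.
  have N0 : 0 < N := le_lt_trans cRb0 cRbN.
  move: cRbN; rewrite ltr_pdivrMr // => cRbN.
  rewrite f00; apply: lt_le_trans (f_lb N0); apply: mulr_gt0 => //.
  by rewrite subr_gt0 [lam * N]mulrC.
have := big_g0 f0n0 xs Lxs; rewrite -/N gt_max ltr_pdivrMr // => /andP[f0N cRbN].
have N0 : 0 < N := le_lt_trans (normr_ge0 _) f0N.
apply: le_lt_trans (ler_norm _) _; apply: lt_le_trans f0N _.
by apply: le_trans (f_lb N0); rewrite ler_peMr ?ltW // ltrBrDr [lam * N]mulrC.
Qed.
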